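(* Let $(I,\leq)$ and $(J,\preccurlyeq)$ be finite posets and $\mathcal P\colon J^{\mathrm{op}}\to\mathrm{Fun}(I,\mathrm{vect}_K)$ a thin functor, and let $\mathcal P$ also denote the collection $\{\mathcal P(a)\mid a\in J,\ \mathcal P(a)\neq 0\}$. Then (1) every functor in $\mathrm{Fun}(I,\mathrm{vect}_K)$ admits a minimal $\mathcal P$-resolution; (2) the collection $\mathcal P$ is acyclic.
   Context: $K$ is a field, $\mathrm{vect}_K$ finite-dimensional $K$-vector spaces, $\mathrm{Fun}(I,\mathrm{vect}_K)$ the abelian category of functors $I\to\mathrm{vect}_K$ with natural transformations (hom sets $\mathrm{Nat}_I$). For $a\in J$, $K(a,-)\colon J\to\mathrm{vect}_K$ is the free functor ($K(a,b)=K$ if $a\preccurlyeq b$, else $0$, identity transitions between nonzero values). $\mathcal R M=\mathrm{Nat}_I(\mathcal P(-),M)$ defines $\mathcal R\colon\mathrm{Fun}(I,\mathrm{vect}_K)\to\mathrm{Fun}(J,\mathrm{vect}_K)$ with left adjoint $\mathcal L$ (given by $\mathcal LF=\mathrm{colim}\big(\bigoplus_{a_0\prec a_1}\mathcal P(a_1)\otimes F(a_0)\rightrightarrows\bigoplus_a\mathcal P(a)\otimes F(a)\big)$); $\eta_a\colon K(a,-)\to\mathcal R\mathcal LK(a,-)$ is the unit; $\mathcal P$ is thin if each $\eta_a$ is pointwise surjective. Relative notions for the collection $\mathcal P$: two composable morphisms $f\colon X\to Y$, $g\colon Y\to Z$ form a $\mathcal P$-exact sequence if $\hom(A,X)\to\hom(A,Y)\to\hom(A,Z)$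 is exact for all $A\in\mathcal P$; $f$ is a $\mathcal P$-epimorphism if $\hom(A,f)$ is surjective for all $A\in\mathcal P$; $C$ is $\mathcal P$-projective if $\hom(C,f)$ is surjective for every $\mathcal P$-epimorphism $f$; $C$ is $\mathcal P$-free if it is isomorphic to a finite direct sum of elements of $\mathcal P$; $\mathcal P$ is acyclic if every $\mathcal P$-projective object is $\mathcal P$-free. A $\mathcal P$-cover of $M$ is a $\mathcal P$-epimorphism $C_0\to M$ with $C_0$ $\mathcal P$-projective, minimal if all its endomorphisms over $M$ are isomorphisms. A $\mathcal P$-resolution of $M$ is a $\mathcal P$-exact sequence $\cdots\to C_1\to C_0\to M\to0$ with every $C_d$ $\mathcal P$-projective; it is minimal if every endomorphism of it (a family $f_d\colon C_d\to C_d$ commuting with all maps and with the augmentation to $M$) is an isomorphism, equivalently each $C_d\to\ker(C_{d-1}\to C_{d-2})$ ($C_{-1}=M$, $C_{-2}=0$) is a minimal $\mathcal P$-cover. *)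

(* Representations of finite posets by matrices, row-vector
   convention: a linear map V -> W between K^m and K^n is an m x n matrix M,
   acting by v |-> v *m M; composition "f then g" is f *m g. *)
From HB Require Import structures.
From mathcomp Require Import all_boot all_order all_algebra.
Set Implicit Arguments. Unset Strict Implicit. Unset Printing Implicit Defensive.
Import Order.TTheory GRing.Theory.
Local Open Scope ring_scope.

Section PosetReps.
Variable K : fieldType.

Section FunI.
Variables (dI : Order.disp_t) (I : finPOrderType dI).

(* A functor F : I -> vect_K: F(i) = K^(vdim F i), and for i <= j the
   transition map F(i <= j) = vtr F i j (values for i not <= j are
   irrelevant and never used). *)
Record vfun := VFun {
  vdim : I -> nat;
  vtr : forall i j : I, 'M[K]_(vdim i, vdim j);
  vtr_id : forall i, vtr i i = 1%:M;
  vtr_comp : forall i j k, (i <= j)%O -> (j <= k)%O ->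
     vtr i k = vtr i j *m vtr j k
}.

Definition ntr (F G : vfun) := forall i : I, 'M[K]_(vdim F i, vdim G i).

Definition is_nat (F G : vfun) (a : ntr F G) : Prop :=
  forall i j : I, (i <= j)%O -> vtr F i j *m a j = a i *m vtr G i j.

Definition ncomp (F G H : vfun) (a : ntr F G) (b : ntr G H) : ntr F H :=
  fun i => a i *m b i.
Definition nid (F : vfun) : ntr F F := fun i => 1%:M.
Definition nzero (F G : vfun) : ntr F G := fun i => 0.

Definition is_iso (F G : vfun) (a : ntr F G) : Prop :=
  is_nat a /\ exists b : ntr G F, is_nat b /\
    (forall i, (ncomp a b) i = nid F i) /\ (forall i, (ncomp b a) i = nid G i).

Definition vnonzero (F : vfun) : Prop := exists i, vdim F i <> 0%N.

Lemma vfun0_id (i : I) : (0 : 'M[K]_(0, 0)) = 1%:M.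
Proof. by rewrite flatmx0. Qed.
Lemma vfun0_comp (i j k : I) : (i <= j)%O -> (j <= k)%O ->
  (0 : 'M[K]_(0, 0)) = (0 : 'M[K]_(0, 0)) *m (0 : 'M[K]_(0, 0)).
Proof. by rewrite mul0mx. Qed.
Definition vfun0 : vfun := @VFun (fun _ => 0%N) (fun _ _ => (0 : 'M[K]_(0, 0))) vfun0_id vfun0_comp.

End FunI.

Section PFun.
Variables (dI : Order.disp_t) (I : finPOrderType dI)
          (dJ : Order.disp_t) (J : finPOrderType dJ).

Record pfun := PFun {
  pobj : J -> vfun I;
  pmor : forall a b : J, ntr (pobj b) (pobj a);
  pmor_nat : forall a b, (a <= b)%O -> is_nat (pmor a b);
  pmor_id : forall a i, pmor a a i = 1%:M;
  pmor_comp : forall a b c, (a <= b)%O -> (b <= c)%O ->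
     forall i, pmor a c i = pmor b c i *m pmor a b i
}.

Variable P : pfun.

(* Using L K(a,-) = P(a) (by the colimit formula for L), the unit
   eta_a at b is the map K(a,b) -> Nat_I(P(b), P(a)) sending 1 to P(a <= b)
   when a <= b (and the zero map from 0 otherwise).  Pointwise surjectivity
   of eta_a thus says: *)
Definition thin : Prop :=
  forall (a b : J) (al : ntr (pobj P b) (pobj P a)), is_nat al ->
    if (a <= b)%O then exists c : K, forall i, al i = c *: pmor P a b i
    else forall i, al i = 0.

Definition inP (a : J) : Prop := vnonzero (pobj P a).

Definition Pexact (X Y Z : vfun I) (f : ntr X Y) (g : ntr Y Z) : Prop :=
  forall a, inP a ->
    (forall be : ntr (pobj P a) X, is_nat be ->
        forall i, ncomp (ncomp be f) g i = 0) /\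
    (forall al : ntr (pobj P a) Y, is_nat al ->
        (forall i, ncomp al g i = 0) ->
        exists be : ntr (pobj P a) X, is_nat be /\ forall i, ncomp be f i = al i).

Definition Pepi (X Y : vfun I) (f : ntr X Y) : Prop :=
  forall a, inP a ->
    forall al : ntr (pobj P a) Y, is_nat al ->
      exists be : ntr (pobj P a) X, is_nat be /\ forall i, ncomp be f i = al i.

Definition Pprojective (C : vfun I) : Prop :=
  forall (X Y : vfun I) (f : ntr X Y), is_nat f -> Pepi f ->
    forall al : ntr C Y, is_nat al ->
      exists be : ntr C X, is_nat be /\ forall i, ncomp be f i = al i.

(* P-free: isomorphic to a finite direct sum of elements of P, expressed
   via the biproduct (direct sum) data: injections iota_k, projections pi_k
   with pi_k iota_l = delta_kl and sum_k iota_k pi_k = id. *)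
Definition Pfree (C : vfun I) : Prop :=
  exists (n : nat) (t : 'I_n -> J),
    (forall k, inP (t k)) /\
    exists (io : forall k, ntr (pobj P (t k)) C)
           (pr : forall k, ntr C (pobj P (t k))),
      (forall k, is_nat (io k)) /\ (forall k, is_nat (pr k)) /\
      (forall k i, io k i *m pr k i = 1%:M) /\
      (forall k l i, k != l -> io l i *m pr k i = 0) /\
      (forall i, \sum_(k < n) pr k i *m io k i = 1%:M).

Definition acyclic : Prop := forall C : vfun I, Pprojective C -> Pfree C.

(* Chain complexes  ... -> C_2 -> C_1 -> C_0 -> M -> 0 *)
Record presol (M : vfun I) := PResol {
  rC : nat -> vfun I;
  rd : forall d : nat, ntr (rC d.+1) (rC d);
  reps : ntr (rC 0) M
}.

Definition is_Presolution (M : vfun I) (R : presol M) : Prop :=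
  (forall d, is_nat (rd R d)) /\ is_nat (reps R) /\
  (forall d, Pprojective (rC R d)) /\
  Pexact (reps R) (nzero M (vfun0 I)) /\
  Pexact (rd R 0) (reps R) /\
  (forall d, Pexact (rd R d.+1) (rd R d)).

Definition is_Pres_endo (M : vfun I) (R : presol M)
  (f : forall d, ntr (rC R d) (rC R d)) : Prop :=
  (forall d, is_nat (f d)) /\
  (forall d i, ncomp (f d.+1) (rd R d) i = ncomp (rd R d) (f d) i) /\
  (forall i, ncomp (f 0%N) (reps R) i = reps R i).

Definition is_min_Presolution (M : vfun I) (R : presol M) : Prop :=
  is_Presolution R /\
  forall f : forall d, ntr (rC R d) (rC R d), is_Pres_endo f ->
    forall d, is_iso (f d).

End PFun.
End PosetReps.

(* Every X is the P-epimorphic image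
   of a P-free functor (finitely many maps generate each Nat(P(b), X)), and a
   cover C = (+)_k P(t k) -> X with the fewest summands is minimal: if an
   endomorphism f of C over an automorphism of X were singular at some i, take
   a kernel vector of f(i) and a summand k on which it is nonzero with t k
   maximal.  By thinness, the coordinates of that vector on the summands of
   type t k combine into a map P(t k) -> C that splits summand k off while
   still covering X, against minimality.  Iterating minimal covers on kernels
   gives a minimal P-resolution.  A P-projective C splits its minimal cover
   p : C' -> C by some s; then p s is an endomorphism of C' over the identity,
   hence invertible, so C is isomorphic to the P-free C'. *)

From mathcomp Require Import all_boot all_order all_algebra.
From Stdlib Require Import Classical ClassicalEpsilon Wf_nat.
Set Implicit Arguments. Unset Strict Implicit. Unset Printing Implicit Defensive.
Import Order.TTheory GRing.Theory.
Local Open Scope ring_scope.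

Section NatTrans.
Variables (K : fieldType) (dI : Order.disp_t) (I : finPOrderType dI).
Local Notation vf := (vfun K I).

Lemma is_nat_comp (F G H : vf) (a : ntr F G) (b : ntr G H) :
  is_nat a -> is_nat b -> is_nat (ncomp a b).
Proof. by move=> na nb i j lij; rewrite /ncomp mulmxA na // -mulmxA nb // mulmxA. Qed.

Lemma is_nat_add (F G : vf) (a b : ntr F G) :
  is_nat a -> is_nat b -> is_nat (fun i => a i + b i).
Proof. by move=> na nb i j lij; rewrite mulmxDr mulmxDl na // nb. Qed.

Lemma is_nat_sub (F G : vf) (a b : ntr F G) :
  is_nat a -> is_nat b -> is_nat (fun i => a i - b i).
Proof. by move=> na nb i j lij; rewrite mulmxBr mulmxBl na // nb. Qed.

Lemma is_nat_scale (F G : vf) (c : K) (a : ntr F G) :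
  is_nat a -> is_nat (fun i => c *: a i).
Proof. by move=> na i j lij; rewrite -scalemxAr na // scalemxAl. Qed.

Lemma is_nat_sum (F G : vf) (T : Type) (r : seq T) (Q : pred T) (a : T -> ntr F G) :
  (forall k, Q k -> is_nat (a k)) -> is_nat (fun i => \sum_(k <- r | Q k) a k i).
Proof.
by move=> na i j lij; rewrite mulmx_sumr mulmx_suml; apply: eq_bigr => k /na ->.
Qed.

Lemma is_nat_id (F : vf) : is_nat (nid F).
Proof. by move=> i j _; rewrite /nid mulmx1 mul1mx. Qed.

Lemma is_nat_invmx (F : vf) (a : ntr F F) :
  is_nat a -> (forall i, a i \in unitmx) -> is_nat (fun i => invmx (a i)).
Proof.
move=> na ua i j lij /=; apply: (canRL (mulKmx (ua i))).
by rewrite mulmxA -na // -mulmxA mulmxV // mulmx1.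
Qed.

Lemma is_iso_unitmx (F : vf) (a : ntr F F) :
  is_nat a -> (forall i, a i \in unitmx) -> is_iso a.
Proof.
move=> na ua; split=> //; exists (fun i => invmx (a i)).
by split; [exact: is_nat_invmx | split=> i; rewrite /ncomp /nid ?mulmxV ?mulVmx].
Qed.

End NatTrans.

Section Kernel.
Variables (K : fieldType) (dI : Order.disp_t) (I : finPOrderType dI).
Local Notation vf := (vfun K I).
Variables (C X : vf) (p : ntr C X).
Hypothesis np : is_nat p.

Let kb i := row_base (kermx (p i)).

Let sub_kb i m (v : 'M_(m, vdim C i)) : v *m p i = 0 -> (v <= kb i)%MS.
Proof. by move=> vp0; rewrite eq_row_base sub_kermx vp0. Qed.

Let kb_mul_eq0 i : kb i *m p i = 0.
Proof. by apply/eqP; rewrite -sub_kermx eq_row_base submx_refl. Qed.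

Let ktr i j := kb i *m vtr C i j *m pinvmx (kb j).

Let ktrE i j : (i <= j)%O -> ktr i j *m kb j = kb i *m vtr C i j.
Proof.
by move=> lij; apply/mulmxKpV/sub_kb; rewrite -mulmxA np // mulmxA kb_mul_eq0 mul0mx.
Qed.

Let ktr_id i : ktr i i = 1%:M.
Proof.
by apply: (row_free_inj (row_base_free _)); rewrite ktrE // vtr_id mulmx1 mul1mx.
Qed.

Let ktr_comp i j k : (i <= j)%O -> (j <= k)%O -> ktr i k = ktr i j *m ktr j k.
Proof.
move=> lij ljk; apply: (row_free_inj (row_base_free _)).
rewrite ktrE ?(le_trans lij ljk) // -mulmxA ktrE // mulmxA ktrE //.
by rewrite -mulmxA -vtr_comp.
Qed.

Definition kerf : vf := VFun ktr_id ktr_comp.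
Definition kinc : ntr kerf C := kb.

Lemma kinc_nat : is_nat kinc.
Proof. by move=> i j lij; rewrite /kinc /= ktrE. Qed.

Lemma kinc_mul_eq0 i : kinc i *m p i = 0.
Proof. exact: kb_mul_eq0. Qed.

Lemma kinc_inj i m (u v : 'M_(m, vdim kerf i)) : u *m kinc i = v *m kinc i -> u = v.
Proof. exact: (row_free_inj (row_base_free _)). Qed.

Lemma kinc_factor (F : vf) (al : ntr F C) :
  is_nat al -> (forall i, al i *m p i = 0) ->
  exists be : ntr F kerf, is_nat be /\ forall i, be i *m kinc i = al i.
Proof.
move=> nal alp0; exists (fun i => al i *m pinvmx (kb i)).
have E i : al i *m pinvmx (kb i) *m kinc i = al i by exact/mulmxKpV/sub_kb.
by split=> // i j lij; apply: kinc_inj; rewrite -mulmxA E nal // -mulmxA kinc_nat // mulmxA E.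
Qed.

Lemma kinc_restrict_unit (f : ntr C C) (phi : ntr X X) :
  is_nat f -> (forall i, f i \in unitmx) -> (forall i, phi i \in unitmx) ->
  (forall i, f i *m p i = p i *m phi i) ->
  exists psi : ntr kerf kerf, [/\ is_nat psi, forall i, psi i \in unitmx &
    forall i, psi i *m kinc i = kinc i *m f i].
Proof.
move=> nf uf uphi fp.
have fVp i : invmx (f i) *m p i = p i *m invmx (phi i).
  by apply/esym/(canRL (mulKmx (uf i))); rewrite mulmxA fp -mulmxA mulmxV // mulmx1.
have fk0 i : kinc i *m f i *m p i = 0.
  by rewrite -mulmxA fp mulmxA kinc_mul_eq0 mul0mx.
have fVk0 i : kinc i *m invmx (f i) *m p i = 0.
  by rewrite -mulmxA fVp mulmxA kinc_mul_eq0 mul0mx.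
have [psi [npsi psiE]] := kinc_factor (is_nat_comp kinc_nat nf) fk0.
have [psi' [_ psi'E]] := kinc_factor (is_nat_comp kinc_nat (is_nat_invmx nf uf)) fVk0.
exists psi; split=> // i.
suff /mulmx1_unit[] : psi i *m psi' i = 1%:M by [].
by apply: kinc_inj; rewrite -mulmxA psi'E mulmxA psiE -mulmxA mulmxV // mulmx1 mul1mx.
Qed.

End Kernel.

Section MatrixBiproduct.
Context {R : comNzRingType} {n : nat} (d : 'I_n -> nat).
Local Notation D := (\sum_k d k)%N.

Definition mxinj k : 'M[R]_(d k, D) :=
  \mxrow_l (if k == l then conform_mx 0 (1%:M : 'M_(d k)) else 0).
Definition mxproj k : 'M[R]_(D, d k) :=
  \mxcol_l (if l == k then conform_mx 0 (1%:M : 'M_(d k)) else 0).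

Lemma mxinjK k : mxinj k *m mxproj k = 1%:M.
Proof.
rewrite mul_mxrow_mxcol (bigD1 k) //= eqxx conform_mx_id mulmx1 big1 ?addr0 //.
by move=> m /negbTE km; rewrite eq_sym km mul0mx.
Qed.

Lemma mxinj_proj_neq k l : k != l -> mxinj k *m mxproj l = 0.
Proof.
move=> kl; rewrite mul_mxrow_mxcol big1 // => m _.
by case: eqVneq => [<-|_]; rewrite ?(negbTE kl) ?mulmx0 ?mul0mx.
Qed.

Lemma sum_mxproj_inj : \sum_k mxproj k *m mxinj k = 1%:M.
Proof.
rewrite (eq_bigr _ (fun k _ => mul_mxcol_mxrow _ _)) -mxblock_sum.
rewrite -[RHS](mxdiagZ (p_ := d) 1); apply/eq_mxblock => l l'.
rewrite (bigD1 l) //= eqxx big1 => [|m]; last by rewrite eq_sym => /negbTE ->; rewrite mul0mx.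
by case: eqVneq => [<-|_]; rewrite ?conform_mx_id ?mulmx1 ?mulmx0 addr0.
Qed.

End MatrixBiproduct.

Section Biproducts.
Variables (K : fieldType) (dI : Order.disp_t) (I : finPOrderType dI).
Local Notation vf := (vfun K I).

Definition is_biproduct (C : vf) n (Fs : 'I_n -> vf)
    (io : forall k, ntr (Fs k) C) (pr : forall k, ntr C (Fs k)) : Prop :=
  (forall k, is_nat (io k)) /\ (forall k, is_nat (pr k)) /\
  (forall k i, io k i *m pr k i = 1%:M) /\
  (forall k l i, k != l -> io l i *m pr k i = 0) /\
  (forall i, \sum_(k < n) pr k i *m io k i = 1%:M).

Section DirectSum.
Variables (n : nat) (Fs : 'I_n -> vf).
Local Notation d i := (fun k => vdim (Fs k) i).

Definition dsum_tr i j : 'M[K]_(\sum_k d i k, \sum_k d j k) :=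
  \sum_k mxproj (d i) k *m vtr (Fs k) i j *m mxinj (d j) k.

Lemma mxinj_dsum_tr i j k :
  mxinj (d i) k *m dsum_tr i j = vtr (Fs k) i j *m mxinj (d j) k.
Proof.
(* The matrix type annotation keeps [bigD1] and [big1] off the [nat] sums
   occurring in the dimensions. *)
rewrite mulmx_sumr (bigD1 (R := 'M_(_, _)) k) //= !mulmxA mxinjK mul1mx.
rewrite (big1 (R := 'M_(_, _))) ?addr0 // => l lk.
by rewrite !mulmxA mxinj_proj_neq 1?eq_sym // !mul0mx.
Qed.

Lemma dsum_tr_mxproj i j k :
  dsum_tr i j *m mxproj (d j) k = mxproj (d i) k *m vtr (Fs k) i j.
Proof.
rewrite mulmx_suml (bigD1 (R := 'M_(_, _)) k) //= -!mulmxA mxinjK mulmx1.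
rewrite (big1 (R := 'M_(_, _))) ?addr0 // => l lk.
by rewrite -!mulmxA mxinj_proj_neq // !mulmx0.
Qed.

Lemma dsum_tr_id i : dsum_tr i i = 1%:M.
Proof. by rewrite -(sum_mxproj_inj (d i)); apply: eq_bigr => k _; rewrite vtr_id mulmx1. Qed.

Lemma dsum_tr_comp i j l : (i <= j)%O -> (j <= l)%O ->
  dsum_tr i l = dsum_tr i j *m dsum_tr j l.
Proof.
move=> lij ljl; rewrite {1 2}/dsum_tr mulmx_suml; apply: eq_bigr => k _.
by rewrite -!mulmxA mxinj_dsum_tr (vtr_comp _ lij ljl) -!mulmxA.
Qed.

Definition dsum : vf := VFun dsum_tr_id dsum_tr_comp.
Definition dsum_inj k : ntr (Fs k) dsum := fun i => mxinj (d i) k.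
Definition dsum_proj k : ntr dsum (Fs k) := fun i => mxproj (d i) k.

Lemma dsum_biproduct : is_biproduct dsum_inj dsum_proj.
Proof.
split; first by move=> k i j lij; rewrite /dsum_inj /= mxinj_dsum_tr.
split; first by move=> k i j lij; rewrite /dsum_proj /= dsum_tr_mxproj.
split; first by move=> k i; exact: mxinjK.
split; first by move=> k l i lk; apply: mxinj_proj_neq; rewrite eq_sym.
by move=> i; exact: sum_mxproj_inj.
Qed.

End DirectSum.

Lemma biproduct_complement (C : vf) n (Fs : 'I_n -> vf)
    (io : forall k, ntr (Fs k) C) (pr : forall k, ntr C (Fs k)) (k : 'I_n) :
  is_biproduct io pr ->
  exists (C' : vf) (io' : forall m, ntr (Fs (lift k m)) C')
         (pr' : forall m, ntr C' (Fs (lift k m))) (jj : ntr C' C) (qq : ntr C C'),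
    [/\ is_biproduct io' pr', is_nat jj, is_nat qq &
        forall i, qq i *m jj i = 1%:M - pr k i *m io k i].
Proof.
move=> [nio [npr [io_pr [io_pr_neq sum_pr_io]]]].
have C'_biprod := dsum_biproduct (fun m => Fs (lift k m)).
have [nio' [npr' [io_pr' [io_pr_neq' _]]]] := C'_biprod.
set io' := dsum_inj _ in nio' io_pr' io_pr_neq' C'_biprod.
set pr' := dsum_proj _ in npr' io_pr' io_pr_neq' C'_biprod.
exists _, io', pr', (fun i => \sum_m pr' m i *m io (lift k m) i),
  (fun i => \sum_m pr (lift k m) i *m io' m i); split=> //.
- move=> i j lij; rewrite mulmx_sumr mulmx_suml; apply: eq_bigr => m _.
  exact: (is_nat_comp (npr' m) (nio (lift k m))).
- move=> i j lij; rewrite mulmx_sumr mulmx_suml; apply: eq_bigr => m _.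
  exact: (is_nat_comp (npr (lift k m)) (nio' m)).
move=> i; rewrite -(sum_pr_io i) (bigD1_ord k) //= addrC addrK mulmx_suml.
apply: eq_bigr => m _; rewrite mulmx_sumr (bigD1 (R := 'M_(_, _)) m) //=.
rewrite mulmxA -(mulmxA _ (io' m i)) io_pr' mulmx1 (big1 (R := 'M_(_, _))) ?addr0 // => m' m'm.
by rewrite mulmxA -(mulmxA _ (io' m i)) io_pr_neq' ?mulmx0 ?mul0mx.
Qed.

Lemma biproduct_iso (C C' : vf) n (Fs : 'I_n -> vf)
    (io : forall k, ntr (Fs k) C) (pr : forall k, ntr C (Fs k))
    (u : ntr C C') (u' : ntr C' C) :
  is_biproduct io pr -> is_nat u -> is_nat u' ->
  (forall i, u i *m u' i = 1%:M) -> (forall i, u' i *m u i = 1%:M) ->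
  is_biproduct (fun k => ncomp (io k) u) (fun k => ncomp u' (pr k)).
Proof.
move=> [nio [npr [io_pr [io_pr_neq sum_pr_io]]]] nu nu' uu' u'u.
have uu'E i m p (A : 'M_(m, vdim C i)) (B : 'M_(vdim C i, p)) :
    A *m u i *m (u' i *m B) = A *m B.
  by rewrite mulmxA -(mulmxA A) uu' mulmx1.
split; first by move=> k; apply: is_nat_comp.
split; first by move=> k; apply: is_nat_comp.
split; first by move=> k i; rewrite /ncomp uu'E io_pr.
split; first by move=> k l i lk; rewrite /ncomp uu'E io_pr_neq.
move=> i; rewrite /ncomp; under eq_bigr => k _ do rewrite mulmxA -(mulmxA (u' i)).
by rewrite -mulmx_suml -mulmx_sumr sum_pr_io mulmx1 u'u.
Qed.

End Biproducts.

Lemma ex_spanning_seq (K : fieldType) (vT : vectType K) (S : vT -> Prop) :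
  exists2 X : seq vT, {in X, forall x, S x} & forall v, S v -> v \in <<X>>%VS.
Proof.
suff ext m (X : seq vT) : free X -> {in X, forall x, S x} ->
    (\dim {:vT} - size X <= m)%N ->
    exists2 Y : seq vT, {in Y, forall x, S x} & forall v, S v -> v \in <<Y>>%VS.
  by apply: (ext _ [::]); rewrite ?nil_free.
elim: m X => [|m IH] X freeX SX room;
  have [[v [Sv vX]]|spanX] := classic (exists v, S v /\ v \notin <<X>>%VS);
  try by exists X => // v Sv; apply/negPn/negP => vX; apply: spanX; exists v.
- have freevX : free (v :: X) by rewrite free_cons vX.
  have := dimvS (subvf <<v :: X>>); rewrite (eqP freevX) /= => lt_dim.
  by move: room; rewrite leqn0 subn_eq0 => /(leq_trans lt_dim); rewrite ltnn.
- apply: (IH (v :: X)); first by rewrite free_cons vX.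
    by move=> x; rewrite inE => /orP[/eqP->|/SX].
  by rewrite /= subnS -subn1 leq_subLR add1n.
Qed.

Section NatSpan.
Variables (K : fieldType) (dI : Order.disp_t) (I : finPOrderType dI).
Variables (F G : vfun K I).

Definition nat_vec (al : ntr F G) :
    'rV[K]_(\sum_(k < #|I|) vdim F (enum_val k) * vdim G (enum_val k)) :=
  \mxrow_k mxvec (al (enum_val k)).

Lemma nat_vec_inj (al be : ntr F G) : nat_vec al = nat_vec be -> forall i, al i = be i.
Proof.
by rewrite /nat_vec => /eq_mxrowP E i; rewrite -(enum_rankK i); exact: (can_inj mxvecK (E _)).
Qed.

Lemma nat_vec_lincomb m (c : 'I_m -> K) (a : 'I_m -> ntr F G) :
  nat_vec (fun i => \sum_j c j *: a j i) = \sum_j c j *: nat_vec (a j).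
Proof.
rewrite /nat_vec; under eq_mxrow do rewrite linear_sum.
rewrite mxrow_sum; apply: eq_bigr => j _.
by apply/matrixP => x y; rewrite !mxE linearZ /= mxE.
Qed.

Lemma ex_nat_span : exists m (xs : 'I_m -> ntr F G), (forall j, is_nat (xs j)) /\
  forall al, is_nat al -> exists c : 'I_m -> K, forall i, al i = \sum_j c j *: xs j i.
Proof.
have [X SX spanX] := ex_spanning_seq (fun v => exists2 al, is_nat al & nat_vec al = v).
have xsE (j : 'I_(size X)) : exists al, is_nat al /\ nat_vec al = X`_j.
  by have [al ? ?] := SX _ (mem_nth 0 (ltn_ord j)); exists al.
have [xs {}xsE] := fin_all_exists xsE.
exists (size X), xs; split=> [j | al nal]; first by case: (xsE j).
have /coord_span E : nat_vec al \in <<in_tuple X>>%VS by apply: spanX; exists al.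
exists (fun j => coord (in_tuple X) j (nat_vec al)); apply: nat_vec_inj.
by rewrite nat_vec_lincomb {1}E; apply: eq_bigr => j _; case: (xsE j) => _ ->.
Qed.

End NatSpan.

Section Covers.
Variables (K : fieldType) (dI : Order.disp_t) (I : finPOrderType dI)
          (dJ : Order.disp_t) (J : finPOrderType dJ) (P : pfun K I J).
Local Notation vf := (vfun K I).
Local Notation PO := (pobj P).

Lemma inPP b : reflect (inP P b) [exists i, vdim (PO b) i != 0%N].
Proof. by apply: (iffP existsP) => -[i /eqP]; exists i. Qed.

Lemma Pfree_Pprojective (C : vf) : Pfree P C -> Pprojective P C.
Proof.
move=> [n [t [inPt [io [pr [nio [npr [_ [_ sum_pr_io]]]]]]]]] X Y f nf ef al nal.
have lift k : exists be : ntr (PO (t k)) X,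
    is_nat be /\ forall i, ncomp be f i = io k i *m al i.
  exact/ef/is_nat_comp.
have [be beE] := fin_all_exists lift.
exists (fun i => \sum_k pr k i *m be k i); split.
  by apply: is_nat_sum => k _; apply: is_nat_comp => //; case: (beE k).
move=> i; rewrite /ncomp mulmx_suml.
under eq_bigr => k _ do rewrite -mulmxA [_ *m f i](proj2 (beE k) i) mulmxA.
by rewrite -mulmx_suml sum_pr_io mul1mx.
Qed.

Definition Pfree_cover (X : vf) (n : nat) : Prop :=
  exists (C : vf) (t : 'I_n -> J) (io : forall k, ntr (PO (t k)) C)
         (pr : forall k, ntr C (PO (t k))) (p : ntr C X),
    (forall k, inP P (t k)) /\ is_biproduct io pr /\ is_nat p /\ Pepi P p.

Lemma Pepi_lincomb (C X : vf) (p : ntr C X) :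
  (forall b, inP P b -> forall al : ntr (PO b) X, is_nat al ->
     exists m (c : 'I_m -> K) (g : 'I_m -> ntr (PO b) C),
       (forall j, is_nat (g j)) /\ forall i, al i = \sum_j c j *: (g j i *m p i)) ->
  Pepi P p.
Proof.
move=> span b inPb al nal; have [m [c [g [ng alE]]]] := span b inPb al nal.
exists (fun i => \sum_j c j *: g j i); split.
  by apply: is_nat_sum => j _; apply/is_nat_scale/ng.
by move=> i; rewrite /ncomp alE mulmx_suml; apply: eq_bigr => j _; rewrite scalemxAl.
Qed.

Lemma ex_Pfree_cover (X : vf) : exists n, Pfree_cover X n.
Proof.
have span b : exists gs : {m : nat & 'I_m -> ntr (PO b) X},
    (forall j, is_nat (projT2 gs j)) /\ forall al, is_nat al ->
    exists c : 'I_(projT1 gs) -> K, forall i, al i = \sum_j c j *: projT2 gs j i.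
  by have [m [xs spanxs]] := ex_nat_span (PO b) X; exists (Tagged _ xs).
have [gs gsE] := fin_all_exists span.
(* One summand [P b] for each generator of [Nat (P b) X] with [P b] nonzero. *)
pose T := {x : {b : J & 'I_(projT1 (gs b))} | [exists i, vdim (PO (tag x)) i != 0%N]}.
pose t (k : 'I_#|{: T}|) := tag (val (enum_val k)).
pose gen (x : T) : ntr (PO (tag (val x))) X := projT2 (gs (tag (val x))) (tagged (val x)).
have ngen x : is_nat (gen x) by case: (gsE (tag (val x))) => ng _; apply: ng.
pose C := dsum (fun k => PO (t k)).
pose io := dsum_inj (fun k => PO (t k)); pose pr := dsum_proj (fun k => PO (t k)).
have [nio [npr [io_pr [io_pr_neq _]]]] := dsum_biproduct (fun k => PO (t k)).
pose p : ntr C X := fun i => \sum_k pr k i *m gen (enum_val k) i.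
have io_p k i : io k i *m p i = gen (enum_val k) i.
  rewrite mulmx_sumr (bigD1 k) //= mulmxA io_pr mul1mx big1 ?addr0 // => l lk.
  by rewrite mulmxA io_pr_neq ?mul0mx.
exists #|{: T}|, C, t, io, pr, p; split.
  by move=> k; apply/inPP; exact: (valP (enum_val k)).
split; first exact: dsum_biproduct.
split.
  move=> i j lij; rewrite mulmx_sumr mulmx_suml; apply: eq_bigr => k _.
  exact: (is_nat_comp (npr k) (ngen _)).
apply: Pepi_lincomb => b /inPP inPb al /(proj2 (gsE b)) [c alE].
pose kk j := enum_rank (exist _ (Tagged (fun b => 'I_(projT1 (gs b))) j) inPb : T).
have tkk j : t (kk j) = b by rewrite /t enum_rankK.
exists (projT1 (gs b)), c, (fun j i => pmor P (t (kk j)) b i *m io (kk j) i); split.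
  by move=> j; apply: is_nat_comp => //; apply: pmor_nat; rewrite tkk.
move=> i; rewrite alE; apply: eq_bigr => j _; congr (_ *: _).
by rewrite -mulmxA io_p /t /kk enum_rankK /= pmor_id mul1mx.
Qed.

End Covers.

Section ThinCovers.
Variables (K : fieldType) (dI : Order.disp_t) (I : finPOrderType dI)
          (dJ : Order.disp_t) (J : finPOrderType dJ) (P : pfun K I J).
Hypothesis thinP : thin P.
Local Notation vf := (vfun K I).
Local Notation PO := (pobj P).

Lemma thin_eq0 a b (al : ntr (PO b) (PO a)) :
  is_nat al -> ~~ (a <= b)%O -> forall i, al i = 0.
Proof. by move=> nal nab; have := thinP nal; rewrite (negbTE nab). Qed.

Lemma thin_scalar a b (al : ntr (PO b) (PO a)) :
  is_nat al -> (a <= b)%O -> exists c, forall i, al i = c *: pmor P a b i.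
Proof. by move=> nal ab; have := thinP nal; rewrite ab. Qed.

Variables (X C : vf) (n : nat) (t : 'I_n -> J).
Variables (io : forall k, ntr (PO (t k)) C) (pr : forall k, ntr C (PO (t k))).
Variable p : ntr C X.
Hypotheses (inPt : forall k, inP P (t k)) (C_biprod : is_biproduct io pr).
Hypotheses (np : is_nat p) (ep : Pepi P p).

Lemma Pfree_cover_drop_summand k (z : ntr (PO (t k)) C) :
  is_nat z -> (forall i, z i *m p i = io k i *m p i) -> (forall i, z i *m pr k i = 0) ->
  Pfree_cover P X n.-1.
Proof.
move=> nz zp zpr; have [nio [npr [io_pr _]]] := C_biprod.
have [C' [io' [pr' [jj [qq [C'_biprod njj nqq qqjj]]]]]] := biproduct_complement k C_biprod.
(* [e] is an endomorphism of [C] over [X] killing summand [k]. *)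
pose e i := 1%:M - pr k i *m io k i + pr k i *m z i.
have ne : is_nat e.
  apply: is_nat_add; last exact: is_nat_comp.
  by apply: is_nat_sub; [exact: is_nat_id | exact: is_nat_comp].
have ep_eq i : e i *m p i = p i.
  by rewrite /e !mulmxDl mulNmx mul1mx -!mulmxA zp subrK.
have epr0 i : e i *m pr k i = 0.
  by rewrite /e !mulmxDl mulNmx mul1mx -!mulmxA io_pr zpr mulmx1 mulmx0 subrr addr0.
exists C', (fun m => t (lift k m)), io', pr', (fun i => jj i *m p i).
split=> //; split=> //; split; first exact: is_nat_comp.
move=> b inPb al nal; have [be [nbe beE]] := ep inPb nal.
exists (fun i => be i *m e i *m qq i); split.
  exact: (is_nat_comp (is_nat_comp nbe ne) nqq).
move=> i; rewrite /ncomp mulmxA -(mulmxA _ (qq i)) qqjj mulmxBr mulmx1 mulmxBl.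
by rewrite -!mulmxA ep_eq (mulmxA (e i)) epr0 mul0mx mulmx0 subr0; apply: beE.
Qed.

Lemma ex_top_component i0 (v : 'rV[K]_(vdim C i0)) : v != 0 ->
  exists k (c : 'I_(vdim (PO (t k)) i0)),
    (v *m pr k i0) 0 c != 0 /\ forall m, (t k < t m)%O -> v *m pr m i0 = 0.
Proof.
have [_ [_ [_ [_ sum_pr_io]]]] := C_biprod; move=> nzv.
have [k1 nzk1] : exists k, v *m pr k i0 != 0.
  apply/existsP; apply: contraNT nzv; rewrite negb_exists => /forallP vpr0.
  rewrite -[v]mulmx1 -(sum_pr_io i0) mulmx_sumr big1 // => k _.
  by rewrite mulmxA (eqP (negPn (vpr0 k))) mul0mx.
(* Minimising the size of the up-set of [t m] makes [t k] maximal. *)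
pose up m := #|[set b | (t m <= b)%O]|.
case: (@arg_minnP _ k1 (fun m => v *m pr m i0 != 0) up nzk1) => k nzk kmin.
have [c nzc] : exists c, (v *m pr k i0) 0 c != 0.
  apply/existsP; apply: contraNT nzk; rewrite negb_exists => /forallP vc0.
  by apply/eqP/rowP => c; rewrite [RHS]mxE; apply/eqP/negPn; exact: vc0.
exists k, c; split=> // m ltkm; apply: contraTeq ltkm => /kmin; apply: contraTN => ltkm.
rewrite -ltnNge; apply/proper_card/properP; split.
  by apply/subsetP => b; rewrite !inE => /(le_trans (ltW ltkm)).
by exists (t k); rewrite !inE ?lexx // lt_geF.
Qed.

Variable f : ntr C C.
Hypothesis nf : is_nat f.

Lemma ex_thin_coef : exists cf : 'I_n -> 'I_n -> K, forall m l, (t l <= t m)%O ->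
  forall i, io m i *m f i *m pr l i = cf m l *: pmor P (t l) (t m) i.
Proof.
have [nio [npr _]] := C_biprod.
have coef m l : exists c : K, (t l <= t m)%O ->
    forall i, io m i *m f i *m pr l i = c *: pmor P (t l) (t m) i.
  have [lm|_] := boolP (t l <= t m)%O; last by exists 0.
  have [c cE] := thin_scalar (is_nat_comp (is_nat_comp (nio m) nf) (npr l)) lm.
  by exists c.
by have [cf cfE] := fin_all_exists (fun m => fin_all_exists (coef m)); exists cf.
Qed.

Section TopLift.
Variables (i0 : I) (v : 'rV[K]_(vdim C i0)) (k : 'I_n) (c : 'I_(vdim (PO (t k)) i0)).
Hypotheses (vf0 : v *m f i0 = 0) (nzc : (v *m pr k i0) 0 c != 0).
Hypothesis vtop : forall m, (t k < t m)%O -> v *m pr m i0 = 0.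
Variable cf : 'I_n -> 'I_n -> K.
Hypothesis cfE : forall m l, (t l <= t m)%O ->
  forall i, io m i *m f i *m pr l i = cf m l *: pmor P (t l) (t m) i.

(* For [t m = t k] this is the [c]-th coordinate of the [m]-th component of [v];
   other values are never used. *)
Let w m := (v *m pr m i0 *m pmor P (t k) (t m) i0) 0 c.

Lemma top_coef_relation l : t l = t k -> \sum_(m | t m == t k) w m * cf m l = 0.
Proof.
move=> tlk; have [nio [npr [_ [_ sum_pr_io]]]] := C_biprod.
have hkl : (t k <= t l)%O by rewrite tlk.
have : (v *m f i0 *m pr l i0 *m pmor P (t k) (t l) i0) 0 c = 0.
  by rewrite vf0 !mul0mx mxE.
rewrite -[v]mulmx1 -(sum_pr_io i0) mulmx_sumr !mulmx_suml summxE => E.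
rewrite big_mkcond; apply: etrans E; apply: eq_bigr => m _.
have -> : v *m (pr m i0 *m io m i0) *m f i0 *m pr l i0 *m pmor P (t k) (t l) i0 =
    v *m pr m i0 *m (io m i0 *m f i0 *m pr l i0) *m pmor P (t k) (t l) i0.
  by rewrite !mulmxA.
have [lm|nlm] := boolP (t l <= t m)%O.
  rewrite cfE // -scalemxAr -scalemxAl -mulmxA -(pmor_comp P hkl lm) mxE mulrC.
  have [//|tmk] := eqVneq (t m) (t k).
  by rewrite vtop ?mul0mx ?mxE ?mulr0 // lt_neqAle eq_sym tmk -tlk.
have tmk : t m != t k by apply: contraNneq nlm => ->; rewrite tlk.
have := thin_eq0 (is_nat_comp (is_nat_comp (nio m) nf) (npr l)) nlm i0.
by rewrite /ncomp => ->; rewrite (negbTE tmk) mulmx0 mul0mx mxE.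
Qed.

Lemma ex_top_section : exists y : ntr (PO (t k)) C, [/\ is_nat y,
  forall i, y i *m pr k i = 1%:M &
  forall l, ~~ (t l < t k)%O -> forall i, y i *m f i *m pr l i = 0].
Proof.
have [nio [npr [io_pr [io_pr_neq _]]]] := C_biprod.
have wk : w k != 0 by rewrite /w pmor_id mulmx1.
pose y i := (w k)^-1 *: \sum_(m | t m == t k) w m *: (pmor P (t m) (t k) i *m io m i).
have ny : is_nat y.
  apply/is_nat_scale/is_nat_sum => m /eqP tmk; apply: is_nat_scale.
  by apply: is_nat_comp (nio m); apply: pmor_nat; rewrite tmk.
exists y; split=> // [i | l].
  rewrite /y -scalemxAl mulmx_suml (bigD1 k) //= big1 => [|m /andP[_ mk]].
    by rewrite -scalemxAl -mulmxA io_pr pmor_id mulmx1 addr0 scalerA mulVf ?scale1r.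
  by rewrite -scalemxAl -mulmxA io_pr_neq 1?eq_sym // mulmx0 scaler0.
rewrite lt_neqAle negb_and negbK => /orP[/eqP tlk | nlk] i; last first.
  by have := thin_eq0 (is_nat_comp (is_nat_comp ny nf) (npr l)) nlk i.
rewrite /y -!scalemxAl !mulmx_suml.
transitivity ((w k)^-1 *: \sum_(m | t m == t k) (w m * cf m l) *: pmor P (t l) (t k) i).
  congr (_ *: _); apply: eq_bigr => m /eqP tmk.
  have lm : (t l <= t m)%O by rewrite tlk tmk.
  have mk : (t m <= t k)%O by rewrite tmk.
  rewrite -!scalemxAl; have -> : pmor P (t m) (t k) i *m io m i *m f i *m pr l i =
      pmor P (t m) (t k) i *m (io m i *m f i *m pr l i) by rewrite !mulmxA.
  by rewrite cfE // -scalemxAr scalerA (pmor_comp P lm mk).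
by rewrite -scaler_suml top_coef_relation // scale0r scaler0.
Qed.

End TopLift.

Variable phi : ntr X X.
Hypotheses (nphi : is_nat phi) (uphi : forall i, phi i \in unitmx).
Hypothesis fp : forall i, f i *m p i = p i *m phi i.

Lemma ex_lift_off_summand k (y : ntr (PO (t k)) C) : is_nat y ->
  (forall l, ~~ (t l < t k)%O -> forall i, y i *m f i *m pr l i = 0) ->
  exists Y : ntr (PO (t k)) C,
    [/\ is_nat Y, forall i, Y i *m p i = y i *m p i & forall i, Y i *m pr k i = 0].
Proof.
move=> ny yf0; have [nio [npr [_ [_ sum_pr_io]]]] := C_biprod.
have lift l : exists be : ntr (PO (t l)) C,
    is_nat be /\ forall i, be i *m p i = io l i *m p i *m invmx (phi i).
  have nal := is_nat_comp (is_nat_comp (nio l) np) (is_nat_invmx nphi uphi).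
  have [be [nbe beE]] := ep (inPt l) nal.
  by exists be.
have [be beE] := fin_all_exists lift.
(* Only the summands strictly below [t k] contribute to [Y], and thinness
   kills their maps into [P (t k)]. *)
exists (fun i => \sum_l y i *m f i *m pr l i *m be l i); split.
- apply: is_nat_sum => l _.
  exact: (is_nat_comp (is_nat_comp (is_nat_comp ny nf) (npr l)) (proj1 (beE l))).
- move=> i; have E l : y i *m f i *m pr l i *m be l i *m p i =
      y i *m f i *m (pr l i *m io l i) *m (p i *m invmx (phi i)).
    by rewrite -mulmxA (proj2 (beE l)) !mulmxA.
  rewrite mulmx_suml (eq_bigr _ (fun l _ => E l)) -mulmx_suml -mulmx_sumr sum_pr_io.
  by rewrite mulmx1 !mulmxA -(mulmxA (y i)) fp mulmxA mulmxK.
move=> i; rewrite mulmx_suml big1 // => l _.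
have [ltlk | nltlk] := boolP (t l < t k)%O; last by rewrite yf0 // !mul0mx.
have := thin_eq0 (is_nat_comp (proj1 (beE l)) (npr k)) (negbT (lt_geF ltlk)) i.
by rewrite /ncomp -mulmxA => ->; rewrite mulmx0.
Qed.

Lemma Pfree_cover_min_unit :
  (forall n', Pfree_cover P X n' -> (n <= n')%N) -> forall i, f i \in unitmx.
Proof.
move=> nmin i0; apply: contraT; rewrite unitmxE unitfE negbK => /det0P[v nzv vf0].
have [k [c [nzc vtop]]] := ex_top_component nzv.
have [cf cfE] := ex_thin_coef.
have [y [ny ypr yf0]] := ex_top_section vf0 nzc vtop cfE.
have [Y [nY Yp Ypr]] := ex_lift_off_summand ny yf0.
have [nio [_ [io_pr _]]] := C_biprod.
pose z i := io k i - y i + Y i.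
have nz : is_nat z by apply/is_nat_add/nY/is_nat_sub/ny/nio.
have zp i : z i *m p i = io k i *m p i by rewrite mulmxDl mulmxBl Yp subrK.
have zpr i : z i *m pr k i = 0 by rewrite mulmxDl mulmxBl io_pr ypr Ypr subrr addr0.
have := nmin _ (Pfree_cover_drop_summand nz zp zpr).
by rewrite leqNgt ltn_predL (leq_ltn_trans (leq0n k) (ltn_ord k)).
Qed.

End ThinCovers.

Section MinimalResolution.
Variables (K : fieldType) (dI : Order.disp_t) (I : finPOrderType dI)
          (dJ : Order.disp_t) (J : finPOrderType dJ) (P : pfun K I J).
Hypothesis thinP : thin P.
Local Notation vf := (vfun K I).

(* Stronger than asking that endomorphisms over [X] be invertible: allowing
   any automorphism [phi] of [X] is what propagates along a resolution. *)
Definition Pmin_cover (X C : vf) (p : ntr C X) : Prop :=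
  [/\ Pfree P C, is_nat p, Pepi P p &
      forall (f : ntr C C) (phi : ntr X X), is_nat f -> is_nat phi ->
        (forall i, phi i \in unitmx) -> (forall i, f i *m p i = p i *m phi i) ->
        forall i, f i \in unitmx].

Lemma ex_Pmin_cover (X : vf) : exists Cp : {C : vf & ntr C X}, Pmin_cover (projT2 Cp).
Proof.
have [n [[C [t [io [pr [p [inPt [C_biprod [np ep]]]]]]]] nmin]] :
    exists n, Pfree_cover P X n /\ forall n', Pfree_cover P X n' -> (n <= n')%N.
  have [n0 cov0] := ex_Pfree_cover P X.
  have [n [[covn least] _]] :=
    @dec_inh_nat_subset_has_unique_least_element _ (fun m => classic _) (ex_intro _ n0 cov0).
  by exists n; split=> // m /least /ssrnat.leP.
exists (Tagged (fun C => ntr C X) p); split=> //.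
  by exists n, t; split=> //; exists io, pr.
move=> f phi nf nphi uphi fp.
exact: (Pfree_cover_min_unit thinP inPt C_biprod np ep nf nphi uphi fp nmin).
Qed.

Definition min_cover (X : vf) : {C : vf & ntr C X} :=
  proj1_sig (constructive_indefinite_description _ (ex_Pmin_cover X)).

Lemma min_coverP (X : vf) : Pmin_cover (projT2 (min_cover X)).
Proof. exact: proj2_sig (constructive_indefinite_description _ (ex_Pmin_cover X)). Qed.

Lemma min_cover_nat (X : vf) : is_nat (projT2 (min_cover X)).
Proof. by case: (min_coverP X). Qed.

Lemma Pexact_kinc (C X Z C' : vf) (p : ntr C X) (np : is_nat p)
    (q : ntr C' (kerf np)) (h : ntr C Z) :
  Pepi P q -> (forall i m (u : 'M_(m, vdim C i)), u *m h i = 0 <-> u *m p i = 0) ->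
  Pexact P (fun i => q i *m kinc np i) h.
Proof.
move=> epi_q kerE a inPa; split=> [be _ i | al nal alh0].
  by apply/kerE; rewrite /ncomp /= -mulmxA -(mulmxA (q i)) kinc_mul_eq0 !mulmx0.
have [be [nbe beE]] := kinc_factor np nal (fun i => proj1 (kerE _ _ _) (alh0 i)).
have [ga [nga gaE]] := epi_q a inPa be nbe.
by exists ga; split=> // i; rewrite /ncomp mulmxA; move: (gaE i); rewrite /ncomp => ->.
Qed.

Fixpoint syzygy (M : vf) (d : nat) : vf :=
  if d is d'.+1 then kerf (min_cover_nat (syzygy M d')) else M.

Definition min_resolution (M : vf) : presol M :=
  @PResol _ _ _ M (fun d => projT1 (min_cover (syzygy M d)))
    (fun d i => projT2 (min_cover (syzygy M d.+1)) i *m kinc (min_cover_nat (syzygy M d)) i)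
    (projT2 (min_cover M)).

Lemma min_resolution_Presolution (M : vf) : is_Presolution P (min_resolution M).
Proof.
split; first by move=> d; exact: is_nat_comp (min_cover_nat _) (kinc_nat _).
split; first exact: min_cover_nat.
split; first by move=> d; apply: Pfree_Pprojective; case: (min_coverP (syzygy M d)).
split.
  move=> a inPa; split=> [be _ i | al nal _]; first by rewrite /ncomp /nzero mulmx0.
  by case: (min_coverP M) => _ _ ep _; exact: ep.
split; first by apply: Pexact_kinc; first by case: (min_coverP (syzygy M 1)).
move=> d; apply: Pexact_kinc; first by case: (min_coverP (syzygy M d.+2)).
move=> i m u; rewrite mulmxA; split=> [|->]; last by rewrite mul0mx.
by rewrite -(mul0mx _ (kinc (min_cover_nat (syzygy M d)) i)) => /kinc_inj.
Qed.

Lemma min_resolution_endo_unit (M : vf)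
    (f : forall d, ntr (rC (min_resolution M) d) (rC (min_resolution M) d)) :
  is_Pres_endo f -> forall d i, f d i \in unitmx.
Proof.
move=> [nf [f_comm f_aug]].
pose p d := projT2 (min_cover (syzygy M d)).
have unit_of d (phi : ntr (syzygy M d) (syzygy M d)) : is_nat phi ->
    (forall i, phi i \in unitmx) -> (forall i, f d i *m p d i = p d i *m phi i) ->
    forall i, f d i \in unitmx.
  by case: (min_coverP (syzygy M d)) => _ _ _; apply; exact: nf.
suff inv d : exists phi : ntr (syzygy M d) (syzygy M d), [/\ is_nat phi,
    forall i, phi i \in unitmx & forall i, f d i *m p d i = p d i *m phi i].
  by move=> d; have [phi [nphi uphi fp]] := inv d; exact: unit_of fp.
elim: d => [|d [phi [nphi uphi fp]]].
  exists (nid M); split; [exact: is_nat_id | by move=> i; rewrite unitmx1 |].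
  by move=> i; rewrite /nid mulmx1; exact: f_aug.
have [psi [npsi upsi psiE]] :=
  kinc_restrict_unit (min_cover_nat (syzygy M d)) (nf d) (unit_of d phi nphi uphi fp) uphi fp.
exists psi; split=> // i; apply: kinc_inj.
rewrite -mulmxA; move: (f_comm d i); rewrite /ncomp /= => ->.
by rewrite -mulmxA -psiE mulmxA.
Qed.

Lemma Pprojective_Pfree (C : vf) : Pprojective P C -> Pfree P C.
Proof.
move=> projC; case: (min_coverP C) => -[n [t [inPt [io [pr C0_biprod]]]]] np ep pmin.
set p := projT2 (min_cover C) in np ep pmin.
have [s [ns sp]] := projC _ _ p np ep (nid C) (is_nat_id C).
have sp1 i : s i *m p i = 1%:M by exact: sp.
have ups i : p i *m s i \in unitmx.
  apply: (pmin _ (nid C) (is_nat_comp np ns) (is_nat_id C)) => [j|j].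
    by rewrite unitmx1.
  by rewrite /nid mulmx1 -mulmxA sp1 mulmx1.
pose s' i := s i *m invmx (p i *m s i).
have ps' i : p i *m s' i = 1%:M by rewrite mulmxA mulmxV.
have s'p i : s' i *m p i = 1%:M.
  suff E : invmx (p i *m s i) *m p i = p i by rewrite -mulmxA E sp1.
  by apply: (canLR (mulKmx (ups i))); rewrite -mulmxA sp1 mulmx1.
exists n, t; split=> //; do 2!eexists.
apply: (biproduct_iso C0_biprod np _ ps' s'p).
exact: is_nat_comp ns (is_nat_invmx (is_nat_comp np ns) ups).
Qed.

End MinimalResolution.

Theorem corollary5p12 (K : fieldType)
  (dI : Order.disp_t) (I : finPOrderType dI)
  (dJ : Order.disp_t) (J : finPOrderType dJ)
  (P : pfun K I J) :
  thin P ->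
  (forall M : vfun K I, exists R : presol M, is_min_Presolution P R) /\
  acyclic P.
Proof.
move=> thinP; split=> [M | C]; last exact: Pprojective_Pfree.
exists (min_resolution thinP M); split; first exact: min_resolution_Presolution.
move=> f endof d; apply: is_iso_unitmx; first exact: endof.1.
exact: min_resolution_endo_unit endof d.
Qed.
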